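(* Let $p>3$ be a prime and for $1\le k\le p-1$ define $$G(p,k)=\frac{p^2\binom{2p}{p}\binom{2p+2k}{p+k}\binom{2p-2k}{p-k}\binom{p+k}{p}}{2^{8p-2k-4}(2p+2k-1)\binom{2k}{k}}.$$ Then $$G\Big(p,\frac{p+1}{2}\Big)\equiv(-1)^{(p-1)/2}p\left(1-3pq_p(2)+6p^2q_p(2)^2\right)\pmod{p^4}.$$
   Context: $q_p(2)=(2^{p-1}-1)/p$ is the Fermat quotient. Congruences between rationals modulo $p^m$ mean the difference is $p^m$ times a rational with denominator prime to $p$. *)

From HB Require Import structures.
From mathcomp Require Import all_boot all_order all_algebra.
Set Implicit Arguments. Unset Strict Implicit. Unset Printing Implicit Defensive.
Import Order.TTheory GRing.Theory Num.Theory.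
Local Open Scope ring_scope.

Definition rat_eqmod (p m : nat) (x y : rat) : Prop :=
  exists r : rat, x - y = (p ^ m)%N%:R * r /\ coprime p `|denq r|%N.

Definition fermat_q2 (p : nat) : rat := ((2 ^ p.-1 - 1)%N)%:R / p%:R.

Definition G (p k : nat) : rat :=
  ((p ^ 2 * 'C(2 * p, p) * 'C(2 * p + 2 * k, p + k) * 'C(2 * p - 2 * k, p - k)
     * 'C(p + k, p))%N)%:R
  / ((2 ^ (8 * p - 2 * k - 4) * (2 * p + 2 * k - 1) * 'C(2 * k, k))%N)%:R.

From HB Require Import structures.
From mathcomp Require Import all_boot all_order all_algebra.
From mathcomp Require Import cyclic ring zify.

(* Write p = 2n + 1 and u = 4^n = 2^(p-1) = 1 + p q_p(2).  Expanding the binomial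
   coefficients into factorials gives
     G(p, n+1) = (-1)^n p P(1)^2 P(2) L(-1) / (L(1) u^7),
   with P(t) = prod_(j<p) (1 + pt/j) and L(t) = prod_(j<=n) (1 + pt/j).  Modulo p^3 a
   product prod_j (1 + p y_j) of p-integral y_j with sum_j y_j^2 = 0 (mod p) equals
   1 + Y + Y^2/2 for Y = p sum_j y_j.  Since H_2(p) and H_2(n) vanish modulo p and
   H_1(p) modulo p^2 (Wolstenholme), P(t) = 1 and L(s) L(t) = L(s + t) modulo p^3.
   Hence L(1) L(-1) = 1, and L(-1) = u L(-1/2) together with L(-1/2)^2 = L(-1) gives
   L(-1) = u^2.  So G(p, n+1) = (-1)^n p u^-3 modulo p^4, and expanding (1 + p q)^-3
   to second order gives the claim. *)

Set Implicit Arguments.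
Unset Strict Implicit.
Unset Printing Implicit Defensive.
Import Order.TTheory GRing.Theory Num.Theory.
Local Open Scope ring_scope.

Definition pintegral (p : nat) : {pred rat} := fun x => coprime p `|denq x|.

Section PIntegral.
Variable p : nat.

Lemma pintegral_frac (a b : int) : coprime p `|b| -> a%:~R / b%:~R \in pintegral p.
Proof.
rewrite unfold_in; case: divqP => [_ _|k x k0 cb]; first exact: coprimen1.
by apply: coprime_dvdr cb; rewrite abszM dvdn_mull.
Qed.

Fact pintegral_subring_closed : subring_closed (pintegral p).
Proof.
have frac x : x = (numq x)%:~R / (denq x)%:~R by rewrite divq_num_den.
split=> [|x y|x y]; rewrite ?unfold_in ?coprimen1 // => cx cy.
  rewrite (frac x) (frac y).
  have -> : (numq x)%:~R / (denq x)%:~R - (numq y)%:~R / (denq y)%:~R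
     = (numq x * denq y - numq y * denq x)%:~R / (denq x * denq y)%:~R :> rat.
    by rewrite rmorphB !rmorphM /=; field; rewrite !intr_eq0 !denq_neq0.
  by apply: pintegral_frac; rewrite abszM coprimeMr cx cy.
rewrite (frac x) (frac y) mulrACA -invfM -!rmorphM /=.
by apply: pintegral_frac; rewrite abszM coprimeMr cx cy.
Qed.

HB.instance Definition _ :=
  GRing.isSubringClosed.Build rat (pintegral p) pintegral_subring_closed.

Lemma pintegralV_nat (m : nat) : coprime p m -> m%:R^-1 \in pintegral p.
Proof. by move=> cm; rewrite -div1r; apply: (@pintegral_frac 1 m). Qed.

End PIntegral.

Ltac pintegral_closed := repeat match goal with
  | |- _ => done
  | |- is_true (_ + _ \in _) => apply: rpredD
  | |- is_true (_ * _ \in _) => apply: rpredM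
  | |- is_true (- _ \in _) => rewrite rpredN
  | |- is_true (_ ^+ _ \in _) => apply: rpredX
  | |- is_true (_%:R \in _) => apply: rpred_nat
  | |- is_true (0 \in _) => apply: rpred0
  | |- is_true (1 \in _) => apply: rpred1
  end.

Section Congruence.
Variable p : nat.
Implicit Types (x y u v c : rat) (m : nat).

Lemma rat_eqmodP m x y :
  rat_eqmod p m x y <-> exists2 r, r \in pintegral p & x = y + p%:R ^+ m * r.
Proof.
rewrite /rat_eqmod natrX; split=> [[r [E hr]] | [r hr ->]]; exists r => //.
  by rewrite -E addrC subrK.
by rewrite addrC addKr.
Qed.

Lemma rat_eqmod_refl m x : rat_eqmod p m x x.
Proof. by apply/rat_eqmodP; exists 0; [pintegral_closed | ring]. Qed.

Lemma rat_eqmod_sym m x y : rat_eqmod p m x y -> rat_eqmod p m y x.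
Proof.
by case/rat_eqmodP=> r hr ->; apply/rat_eqmodP; exists (- r); [pintegral_closed | ring].
Qed.

Lemma rat_eqmod_trans m y x z :
  rat_eqmod p m x y -> rat_eqmod p m y z -> rat_eqmod p m x z.
Proof.
case/rat_eqmodP=> r hr -> /rat_eqmodP[s hs ->].
by apply/rat_eqmodP; exists (s + r); [pintegral_closed | ring].
Qed.

Lemma rat_eqmodD m x y u v :
  rat_eqmod p m x y -> rat_eqmod p m u v -> rat_eqmod p m (x + u) (y + v).
Proof.
case/rat_eqmodP=> r hr -> /rat_eqmodP[s hs ->].
by apply/rat_eqmodP; exists (r + s); [pintegral_closed | ring].
Qed.

Lemma rat_eqmodN m x y : rat_eqmod p m x y -> rat_eqmod p m (- x) (- y).
Proof.
by case/rat_eqmodP=> r hr ->; apply/rat_eqmodP; exists (- r); [pintegral_closed | ring].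
Qed.

Lemma rat_eqmodB m x y u v :
  rat_eqmod p m x y -> rat_eqmod p m u v -> rat_eqmod p m (x - u) (y - v).
Proof. by move=> exy /rat_eqmodN; apply: rat_eqmodD. Qed.

Lemma rat_eqmodMl m c x y :
  c \in pintegral p -> rat_eqmod p m x y -> rat_eqmod p m (c * x) (c * y).
Proof.
move=> hc /rat_eqmodP[r hr ->].
by apply/rat_eqmodP; exists (c * r); [pintegral_closed | ring].
Qed.

Lemma rat_eqmodM m x y u v : y \in pintegral p -> u \in pintegral p ->
  rat_eqmod p m x y -> rat_eqmod p m u v -> rat_eqmod p m (x * u) (y * v).
Proof.
move=> hy hu /rat_eqmodP[r hr ->] /rat_eqmodP[s hs ev].
by apply/rat_eqmodP; exists (r * u + y * s); [pintegral_closed | rewrite ev; ring].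
Qed.

Lemma rat_eqmodX m x y k : x \in pintegral p -> y \in pintegral p ->
  rat_eqmod p m x y -> rat_eqmod p m (x ^+ k) (y ^+ k).
Proof.
move=> hx hy exy; elim: k => [|k IHk]; first exact: rat_eqmod_refl.
by rewrite !exprS; apply: rat_eqmodM => //; pintegral_closed.
Qed.

Lemma rat_eqmod_sum m (I : eqType) (r : seq I) (F G : I -> rat) :
  (forall i, i \in r -> rat_eqmod p m (F i) (G i)) ->
  rat_eqmod p m (\sum_(i <- r) F i) (\sum_(i <- r) G i).
Proof.
elim: r => [|i r IHr] eFG; first by rewrite !big_nil; exact: rat_eqmod_refl.
rewrite !big_cons; apply: rat_eqmodD; first by apply: eFG; rewrite mem_head.
by apply: IHr => j rj; apply: eFG; rewrite in_cons rj orbT.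
Qed.

Lemma rat_eqmod_pintegral m x y :
  y \in pintegral p -> rat_eqmod p m x y -> x \in pintegral p.
Proof. by move=> hy /rat_eqmodP[r hr ->]; pintegral_closed. Qed.

Lemma rat_eqmod_nat_mod (a b : nat) : a = b %[mod p] -> rat_eqmod p 1 a%:R b%:R.
Proof.
move=> eab; apply/rat_eqmodP; exists ((a %/ p)%:R - (b %/ p)%:R); first by pintegral_closed.
by rewrite {1}(divn_eq a p) {1}(divn_eq b p) eab !natrD !natrM; ring.
Qed.

Lemma rat_eqmod_mulp m x y :
  rat_eqmod p m x y -> rat_eqmod p m.+1 (p%:R * x) (p%:R * y).
Proof.
by case/rat_eqmodP=> r hr ->; apply/rat_eqmodP; exists r => //; rewrite exprS; ring.
Qed.

Lemma rat_eqmod_leq k m x y : (k <= m)%N -> rat_eqmod p m x y -> rat_eqmod p k x y.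
Proof.
move=> km /rat_eqmodP[r hr ->]; apply/rat_eqmodP.
exists (p%:R ^+ (m - k) * r); first by pintegral_closed.
by rewrite mulrA -exprD subnKC.
Qed.

Lemma rat_eqmodV m x y : x != 0 -> y != 0 ->
  x^-1 \in pintegral p -> y^-1 \in pintegral p ->
  rat_eqmod p m x y -> rat_eqmod p m x^-1 y^-1.
Proof.
move=> x0 y0 hx hy /rat_eqmodP[r hr Ex]; apply/rat_eqmodP.
exists (- r * x^-1 * y^-1); first by pintegral_closed.
by rewrite Ex in x0 *; field; rewrite x0 y0.
Qed.

Lemma rat_eqmod1_frac x : rat_eqmod p 1 x 1 ->
  exists a b : int, [/\ x = a%:~R / b%:~R, coprime p `|a| & coprime p `|b|].
Proof.
case/rat_eqmodP=> r hr ->; exists (denq r + p%:Z * numq r), (denq r).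
have cpz (z : int) : coprime p `|z| = coprimez p z by rewrite coprimezE absz_nat.
split=> //; last first.
  by rewrite cpz /coprimez addrC mulrC gcdzMDl -/(coprimez _ _) -cpz.
rewrite expr1 -[in LHS](divq_num_den r) rmorphD rmorphM /=.
by field; rewrite intr_eq0 denq_neq0.
Qed.

Lemma rat_eqmod1_pintegralV x : rat_eqmod p 1 x 1 -> x^-1 \in pintegral p.
Proof. by case/rat_eqmod1_frac=> a [b [-> ca _]]; rewrite invf_div; apply: pintegral_frac. Qed.

End Congruence.

Section Units.
Variable p : nat.
Hypothesis p_gt1 : (1 < p)%N.

Let coprime_neq0 c : coprime p c -> c != 0%N.
Proof. by apply: contraTneq => ->; rewrite /coprime gcdn0 gtn_eqF. Qed.

Lemma rat_eqmod1_neq0 x : rat_eqmod p 1 x 1 -> x != 0.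
Proof.
case/rat_eqmod1_frac=> a [b [-> /coprime_neq0 a0 /coprime_neq0 b0]].
by rewrite mulf_neq0 ?invr_eq0 ?intr_eq0 -?absz_eq0.
Qed.

Lemma rat_eqmod1V m x : (0 < m)%N -> rat_eqmod p m x 1 -> rat_eqmod p m x^-1 1.
Proof.
move=> m_gt0 ex; have ex1 := rat_eqmod_leq m_gt0 ex.
rewrite -invr1; apply: rat_eqmodV; rewrite ?oner_neq0 ?invr1 ?rpred1 //.
  exact: rat_eqmod1_neq0.
exact: rat_eqmod1_pintegralV.
Qed.

Lemma rat_eqmod_natV m (a b : nat) : coprime p a -> coprime p b ->
  rat_eqmod p m a%:R b%:R -> rat_eqmod p m a%:R^-1 b%:R^-1.
Proof.
move=> ca cb; apply: rat_eqmodV; rewrite ?pintegralV_nat //.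
  by rewrite pnatr_eq0 coprime_neq0.
by rewrite pnatr_eq0 coprime_neq0.
Qed.

Lemma inv_cube_eqmod q : q \in pintegral p ->
  rat_eqmod p 3 ((1 + p%:R * q) ^- 3) (1 - 3%:R * p%:R * q + 6%:R * p%:R ^+ 2 * q ^+ 2).
Proof.
move=> hq; set u := 1 + p%:R * q.
have u1 : rat_eqmod p 1 u 1 by apply/rat_eqmodP; exists q; rewrite // addrC expr1.
have u0 := rat_eqmod1_neq0 u1; have hu := rat_eqmod1_pintegralV u1.
apply/rat_eqmodP.
exists (- u^-1 ^+ 3 * q ^+ 3 * (10%:R + 15%:R * p%:R * q + 6%:R * p%:R ^+ 2 * q ^+ 2)).
  by pintegral_closed.
by rewrite /u in u0 *; field.
Qed.

End Units.

Definition trunc_exp (y : rat) : rat := 1 + y + y ^+ 2 / 2%:R.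

Section ProductExpansion.
Variable p : nat.
Hypothesis p_coprime2 : coprime p 2.

Let half_pintegral : 2%:R^-1 \in pintegral p := pintegralV_nat p_coprime2.

Lemma prod_1pM_eqmod (s : seq rat) : all (pintegral p) s ->
  rat_eqmod p 3 (\prod_(x <- s) (1 + p%:R * x))
    (1 + p%:R * \sum_(x <- s) x
       + p%:R ^+ 2 / 2%:R * ((\sum_(x <- s) x) ^+ 2 - \sum_(x <- s) x ^+ 2)).
Proof.
elim: s => [_|y s IHs /andP[hy hs]].
  by rewrite !big_nil; apply/rat_eqmodP; exists 0; [pintegral_closed | ring].
case/rat_eqmodP: (IHs hs) => r hr E.
rewrite !big_cons E; set e1 := \sum_(x <- s) x; set e2 := \sum_(x <- s) x ^+ 2.
have hx x : x \in s -> x \in pintegral p by apply: (allP hs).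
have he1 : e1 \in pintegral p by rewrite /e1 big_seq; apply: rpred_sum.
have he2 : e2 \in pintegral p by rewrite /e2 big_seq; apply: rpred_sum => x /hx/rpredX.
apply/rat_eqmodP; exists (r * (1 + p%:R * y) + y * (e1 ^+ 2 - e2) / 2%:R).
  by pintegral_closed.
by field.
Qed.

Lemma prod_1pM_trunc_exp (s : seq rat) : all (pintegral p) s ->
  rat_eqmod p 1 (\sum_(x <- s) x ^+ 2) 0 ->
  rat_eqmod p 3 (\prod_(x <- s) (1 + p%:R * x)) (trunc_exp (p%:R * \sum_(x <- s) x)).
Proof.
move=> hs /rat_eqmodP[r hr]; rewrite add0r expr1 => e2E.
apply: rat_eqmod_trans (prod_1pM_eqmod hs) _; rewrite e2E.
by apply/rat_eqmodP; exists (- r / 2%:R); [pintegral_closed | rewrite /trunc_exp; field].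
Qed.

Lemma trunc_exp_eqmod1 a : a \in pintegral p -> rat_eqmod p 1 (trunc_exp (p%:R * a)) 1.
Proof.
move=> ha; apply/rat_eqmodP; exists (a + p%:R * a ^+ 2 / 2%:R); first by pintegral_closed.
by rewrite /trunc_exp; field.
Qed.

Lemma trunc_exp_mulD a b : a \in pintegral p -> b \in pintegral p ->
  rat_eqmod p 3 (trunc_exp (p%:R * a) * trunc_exp (p%:R * b)) (trunc_exp (p%:R * (a + b))).
Proof.
move=> ha hb; apply/rat_eqmodP.
exists (a * b * (a + b) / 2%:R + p%:R * a ^+ 2 * b ^+ 2 / 4%:R).
  have quarter : 4%:R^-1 \in pintegral p by rewrite (natrM _ 2 2) invfM rpredM.
  by pintegral_closed.
by rewrite /trunc_exp; field.
Qed.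

End ProductExpansion.

Definition harmonic (k m : nat) : rat := \sum_(1 <= j < m) (j%:R ^+ k)^-1.

Lemma sum_nat_halves (R : nmodType) m n (F : nat -> R) : m = (2 * n + 1)%N ->
  \sum_(1 <= j < m) F j = \sum_(1 <= j < n.+1) (F j + F (m - j)%N).
Proof.
move=> ->; rewrite (big_cat_nat _ (n := n.+1)) //=; last by lia.
rewrite big_split /=; congr (_ + _).
rewrite -(add1n n) big_addn (_ : 2 * n + 1 - n = 1 + n)%N; last by lia.
by rewrite big_nat_rev /=; apply: eq_big_nat => j /andP[j1 jn]; congr F; lia.
Qed.

Lemma prod_binomial (b m : nat) :
  \prod_(1 <= j < m.+1) (1 + b%:R / j%:R) = 'C(b + m, m)%:R :> rat.
Proof.
elim: m => [|m IHm]; first by rewrite big_geq // addn0 bin0.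
rewrite big_nat_recr //= IHm addnS.
have := congr1 (fun k => k%:R : rat) (mul_bin_diag (b + m).+1 m).
rewrite !natrM /= => E; apply: (mulfI (x := m.+1%:R)); first by rewrite pnatr_eq0.
rewrite -E -[(b + m).+1]addn1 -[m.+1]addn1 !natrD.
by field; rewrite -(natrD _ m 1) pnatr_eq0 addn1.
Qed.

Lemma binq_fact a b c : a = (b + c)%N ->
  ('C(a, b)%:R : rat) = a`!%:R / (b`!%:R * c`!%:R).
Proof.
move=> ->; have := bin_fact (leq_addr c b); rewrite addKn => E.
by rewrite -E !natrM; field; rewrite !pnatr_eq0 -!lt0n !fact_gt0.
Qed.

Lemma fact_double n : ((2 * n)`! = 2 ^ n * n`! * \prod_(1 <= j < n.+1) (2 * j - 1))%N.
Proof.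
elim: n => [|n IHn]; first by rewrite big_geq.
rewrite big_nat_recr //= (_ : 2 * n.+1 = (2 * n).+2)%N; last by lia.
rewrite !factS IHn (_ : ((2 * n).+2 - 1 = (2 * n).+1)%N); last by lia.
by rewrite expnS; ring.
Qed.

(* [binprod p m.+1 t] is the binomial coefficient C(x + m, m) evaluated at x = p t. *)
Definition binprod (p m : nat) (t : rat) : rat := \prod_(1 <= j < m) (1 + p%:R * (t / j%:R)).

Lemma binprod0 p m : binprod p m 0 = 1.
Proof. by rewrite /binprod big1 // => j _; rewrite mul0r mulr0 addr0. Qed.

Lemma binprod_nat p m k : binprod p m.+1 k%:R = 'C(p * k + m, m)%:R.
Proof. by rewrite -prod_binomial; apply: eq_bigr => j _; rewrite natrM mulrA. Qed.

Lemma binprod_Ninv p m c : (0 < c)%N -> (c * m <= p)%N ->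
  binprod p m.+1 (- c%:R^-1) =
    (-1) ^+ m * (\prod_(1 <= j < m.+1) (p - c * j))%:R / (c ^ m * m`!)%:R.
Proof.
move=> c_gt0 cm_le_p; rewrite /binprod.
rewrite (eq_big_nat _ _ (F2 := fun j => -1 * ((p - c * j)%:R / (c%:R * j%:R)))); last first.
  move=> j /andP[j1 jm]; rewrite natrB ?natrM; last by nia.
  by field; rewrite !pnatr_eq0 -!lt0n c_gt0 j1.
rewrite big_split prodr_const_nat subn1 /= prodf_div -mulrA; congr (_ * (_ / _)).
  by rewrite natr_prod.
by rewrite big_split prodr_const_nat subn1 fact_prod natrM natrX natr_prod.
Qed.

Lemma G_half_binomial n : G (2 * n + 1) n.+1 =
  (2 * n + 1)%:R * 'C(4 * n + 1, 2 * n)%:R ^+ 2 * 'C(6 * n + 2, 2 * n)%:R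
    * 'C(2 * n, n)%:R / ('C(3 * n + 1, n)%:R * 2%:R ^+ (14 * n)).
Proof.
rewrite /G.
have -> : (2 * (2 * n + 1) + 2 * n.+1 = 6 * n + 4)%N by lia.
have -> : (8 * (2 * n + 1) - 2 * n.+1 - 4 = 14 * n + 2)%N by lia.
have -> : (2 * (2 * n + 1) - 2 * n.+1 = 2 * n)%N by lia.
have -> : (2 * (2 * n + 1) = 4 * n + 2)%N by lia.
have -> : (2 * n + 1 + n.+1 = 3 * n + 2)%N by lia.
have -> : (2 * n + 1 - n.+1 = n)%N by lia.
have -> : (6 * n + 4 - 1 = 3 * (2 * n + 1))%N by lia.
rewrite !natrM natrX.
rewrite (@binq_fact (4 * n + 2) (2 * n + 1) (2 * n + 1)); last by lia.
rewrite (@binq_fact (6 * n + 4) (3 * n + 2) (3 * n + 2)); last by lia.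
rewrite (@binq_fact (3 * n + 2) (2 * n + 1) n.+1); last by lia.
rewrite (@binq_fact (2 * n.+1) n.+1 n.+1); last by lia.
rewrite (@binq_fact (2 * n) n n); last by lia.
rewrite (@binq_fact (4 * n + 1) (2 * n) (2 * n + 1)); last by lia.
rewrite (@binq_fact (6 * n + 2) (2 * n) (4 * n + 2)); last by lia.
rewrite (@binq_fact (3 * n + 1) n (2 * n + 1)); last by lia.
have f1 : (4 * n + 2)`! = (2 * (2 * n + 1) * (4 * n + 1)`!)%N.
  by rewrite (_ : 4 * n + 2 = (4 * n + 1).+1)%N ?factS; nia.
have f2 : (6 * n + 4)`! = (2 * (3 * n + 2) * (3 * (2 * n + 1)) * (6 * n + 2)`!)%N.
  by rewrite (_ : 6 * n + 4 = (6 * n + 2).+2)%N ?factS; nia.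
have f3 : (3 * n + 2)`! = ((3 * n + 2) * (3 * n + 1)`!)%N.
  by rewrite (_ : 3 * n + 2 = (3 * n + 1).+1)%N ?factS; nia.
have f4 : (2 * n.+1)`! = (2 * n.+1 * (2 * n + 1)`!)%N.
  by rewrite (_ : 2 * n.+1 = (2 * n + 1).+1)%N ?factS; nia.
have f5 : (2 * n + 1)`! = ((2 * n + 1) * (2 * n)`!)%N by rewrite addn1 factS.
rewrite f1 f2 f3 f4 f5 factS !natrM exprD.
have nz k : (0 < k)%N -> k%:R != 0 :> rat by rewrite pnatr_eq0 -lt0n.
have fnz k : k`!%:R != 0 :> rat by rewrite nz ?fact_gt0.
have a0 : 2 * n%:R + 1 != 0 :> rat by rewrite -natrM natr1 nz.
have b0 : 3 * n%:R + 2 != 0 :> rat by rewrite -natrM -natrD nz // addn2.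
have c0 : 1 + n%:R != 0 :> rat by rewrite addrC natr1 nz.
by field; rewrite !fnz a0 b0 c0 expf_neq0 // nz.
Qed.

Section OddHalf.
Variables p n : nat.
Hypothesis p_eq : p = (2 * n + 1)%N.

Lemma prod_sub_fact : (n`! * \prod_(1 <= j < n.+1) (p - j) = (2 * n)`!)%N.
Proof.
rewrite (fact_split (leq_pmull n (isT : 0 < 2)%N)) -(add1n n) big_addn.
rewrite (_ : (2 * n).+1 - n = 1 + n)%N; last by lia.
by congr (_ * _); rewrite big_nat_rev /=; apply: eq_big_nat => j /andP[j1 jn]; lia.
Qed.

Lemma prod_sub2_fact : (2 ^ n * n`! * \prod_(1 <= j < n.+1) (p - 2 * j) = (2 * n)`!)%N.
Proof.
rewrite fact_double; congr (_ * _).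
by rewrite big_nat_rev /=; apply: eq_big_nat => j /andP[j1 jn]; lia.
Qed.

Let fact_neq0 : n`!%:R != 0 :> rat.
Proof. by rewrite pnatr_eq0 -lt0n fact_gt0. Qed.

Let binq_central : ('C(2 * n, n)%:R : rat) = (2 * n)`!%:R / (n`!%:R * n`!%:R).
Proof. by apply: binq_fact; lia. Qed.

Lemma binprodN1 : binprod p n.+1 (-1) = (-1) ^+ n * 'C(2 * n, n)%:R.
Proof.
have -> : binprod p n.+1 (-1) = binprod p n.+1 (- 1%:R^-1) by rewrite mulr1n invr1.
rewrite binprod_Ninv //; last by lia.
under eq_bigr do rewrite mul1n.
by rewrite exp1n mul1n binq_central -prod_sub_fact natrM; field.
Qed.

Lemma binprodNhalf : binprod p n.+1 (- 2%:R^-1) = (-1) ^+ n * 'C(2 * n, n)%:R / 4%:R ^+ n.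
Proof.
rewrite binprod_Ninv //; last by lia.
rewrite binq_central -prod_sub2_fact !natrM natrX (_ : 4%:R = 2%:R ^+ 2 :> rat); last first.
  by rewrite -natrX.
by rewrite -exprM mulnC exprM; field; rewrite fact_neq0 expf_neq0 // pnatr_eq0.
Qed.

Lemma G_half_binprod : G p n.+1 = (-1) ^+ n * p%:R *
  (binprod p p 1 ^+ 2 * binprod p p 2%:R * binprod p n.+1 (-1)
     / (binprod p n.+1 1 * (4%:R ^+ n) ^+ 7)).
Proof.
have P1 : binprod p p 1 = 'C(4 * n + 1, 2 * n)%:R.
  by rewrite -[1]mulr1n p_eq addn1 binprod_nat; congr 'C(_, _)%:R; lia.
have P2 : binprod p p 2%:R = 'C(6 * n + 2, 2 * n)%:R.
  by rewrite p_eq addn1 binprod_nat; congr 'C(_, _)%:R; lia.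
have L1 : binprod p n.+1 1 = 'C(3 * n + 1, n)%:R.
  by rewrite -[1]mulr1n binprod_nat; congr 'C(_, _)%:R; lia.
have u7 : (4%:R ^+ n) ^+ 7 = 2%:R ^+ (14 * n) :> rat.
  rewrite -exprM (_ : 4%:R = 2%:R ^+ 2 :> rat); last by rewrite -natrX.
  by rewrite -exprM; congr (_ ^+ _); lia.
have sign_sq := signrMK n (1 : rat); rewrite mulr1 in sign_sq.
have sign2 (s x y z w : rat) : s * x * (y * (s * z) / w) = s * s * (x * y * z / w) by ring.
rewrite P1 P2 L1 binprodN1 u7 sign2 sign_sq mul1r {1}p_eq G_half_binomial -p_eq.
by rewrite !mulrA.
Qed.

End OddHalf.

Section PrimeModulus.
Variable p : nat.
Hypotheses (p_prime : prime p) (p_gt3 : (3 < p)%N).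

Let p_gt1 : (1 < p)%N := prime_gt1 p_prime.

Let coprime_ltn j : (0 < j < p)%N -> coprime p j.
Proof.
case/andP=> j_gt0 j_lt_p; rewrite prime_coprime //.
by apply/negP=> /(dvdn_leq j_gt0); rewrite leqNgt j_lt_p.
Qed.

Let p_coprime2 : coprime p 2. Proof. by apply: coprime_ltn; lia. Qed.

Let half_pintegral : 2%:R^-1 \in pintegral p := pintegralV_nat p_coprime2.

Let invn_pintegral j : (0 < j < p)%N -> j%:R^-1 \in pintegral p.
Proof. by move/coprime_ltn/pintegralV_nat. Qed.

Lemma harmonic_pintegral k m : (m <= p)%N -> harmonic k m \in pintegral p.
Proof.
move=> m_le_p; rewrite /harmonic big_seq; apply: rpred_sum => j.
by rewrite mem_index_iota -exprVn => hj; apply/rpredX/invn_pintegral; lia.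
Qed.

(* Doubling permutes the residues modulo p, so H_2(p) = H_2(p) / 4 modulo p. *)
Lemma harmonic2_eqmod0 : rat_eqmod p 1 (harmonic 2 p) 0.
Proof.
have p_gt0 : (0 < p)%N by lia.
pose f j : rat := (j%:R ^+ 2)^-1.
set S := harmonic 2 p.
have S_ord : S = \sum_(i < p) f i.
  by rewrite -(big_mkord xpredT f) (big_ltn p_gt0) /f expr0n invr0 add0r.
pose dbl (i : 'I_p) : 'I_p := Ordinal (ltn_pmod (2 * i) p_gt0).
have dbl_inj : injective dbl.
  have dbl_cancel i j : (j <= i < p)%N -> (2 * i = 2 * j %[mod p])%N -> i = j.
    move=> /andP[ji ip] /eqP; rewrite eqn_mod_dvd ?leq_mul2l ?ji ?orbT //.
    rewrite -mulnBr Gauss_dvdr //.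
    by case: (posnP (i - j)) => [|ij /(dvdn_leq ij)]; lia.
  move=> i j /(congr1 val) /= eij; apply: val_inj => /=.
  by case: (leqP j i) => ij; [|apply/esym]; apply: dbl_cancel; rewrite ?ltn_ord ?andbT // ltnW.
have S_quarter : rat_eqmod p 1 S (S / 4%:R).
  have -> : S / 4%:R = \sum_(i < p) f (2 * i)%N.
    rewrite S_ord mulr_suml; apply: eq_bigr => i _.
    by rewrite /f natrM exprMn [in RHS]invfM -natrX mulrC.
  rewrite S_ord (reindex_inj dbl_inj) /=; apply: rat_eqmod_sum => i _ /=.
  have [->|i_gt0] := posnP i; first by rewrite muln0 mod0n; exact: rat_eqmod_refl.
  have c2i : coprime p (2 * i) by rewrite coprimeMr p_coprime2 coprime_ltn ?i_gt0 /=.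
  rewrite /f -!natrX; apply: rat_eqmod_natV; rewrite ?coprimeXr ?coprime_modr //.
  by apply: rat_eqmod_nat_mod; rewrite modnXm.
have -> : S = 4%:R / 3%:R * (S - S / 4%:R) by field.
rewrite -(mulr0 (4%:R / 3%:R)); apply: rat_eqmodMl.
  by rewrite rpredM ?rpred_nat ?pintegralV_nat //; apply: coprime_ltn; lia.
by rewrite -(subrr (S / 4%:R)); apply: rat_eqmodB => //; exact: rat_eqmod_refl.
Qed.

Lemma binprod_pintegral m t :
  (m <= p)%N -> t \in pintegral p -> binprod p m t \in pintegral p.
Proof.
move=> m_le_p ht; rewrite /binprod big_seq; apply: rpred_prod => j.
rewrite mem_index_iota => hj.
have hj' : j%:R^-1 \in pintegral p by apply: invn_pintegral; lia.
by pintegral_closed.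
Qed.

Lemma binprod_trunc_exp m t : (m <= p)%N -> t \in pintegral p ->
  rat_eqmod p 1 (harmonic 2 m) 0 ->
  rat_eqmod p 3 (binprod p m t) (trunc_exp (p%:R * (t * harmonic 1 m))).
Proof.
move=> m_le_p ht H2m.
have hs : all (pintegral p) [seq t / j%:R | j <- index_iota 1 m].
  apply/allP=> x /mapP[j]; rewrite mem_index_iota => hj ->.
  by apply: rpredM => //; apply: invn_pintegral; lia.
have H2s : rat_eqmod p 1 (\sum_(x <- [seq t / j%:R | j <- index_iota 1 m]) x ^+ 2) 0.
  rewrite big_map /=.
  have -> : \sum_(1 <= j < m) (t / j%:R) ^+ 2 = t ^+ 2 * harmonic 2 m.
    by rewrite /harmonic mulr_sumr; apply: eq_bigr => j _; rewrite exprMn exprVn.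
  by rewrite -(mulr0 (t ^+ 2)); apply: rat_eqmodMl => //; pintegral_closed.
have := prod_1pM_trunc_exp p_coprime2 hs H2s; rewrite !big_map /=.
suff -> : t * harmonic 1 m = \sum_(1 <= j < m) t / j%:R by [].
by rewrite /harmonic mulr_sumr; apply: eq_bigr => j _; rewrite expr1.
Qed.

Lemma binprod_mulD m s t : (m <= p)%N -> s \in pintegral p -> t \in pintegral p ->
  rat_eqmod p 1 (harmonic 2 m) 0 ->
  rat_eqmod p 3 (binprod p m s * binprod p m t) (binprod p m (s + t)).
Proof.
move=> m_le_p hs ht H2m; have hH1 := harmonic_pintegral 1 m_le_p.
apply: rat_eqmod_trans (rat_eqmodM _ _ (binprod_trunc_exp m_le_p hs H2m)
                                       (binprod_trunc_exp m_le_p ht H2m)) _.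
- by rewrite /trunc_exp; pintegral_closed.
- exact: binprod_pintegral.
apply: rat_eqmod_trans (trunc_exp_mulD p_coprime2 (rpredM hs hH1) (rpredM ht hH1)) _.
rewrite -mulrDl; apply: rat_eqmod_sym; apply: binprod_trunc_exp => //; exact: rpredD.
Qed.

Lemma binprod_eqmod1 m t : (m <= p)%N -> t \in pintegral p ->
  rat_eqmod p 1 (harmonic 2 m) 0 -> rat_eqmod p 1 (binprod p m t) 1.
Proof.
move=> m_le_p ht H2m.
apply: rat_eqmod_trans (rat_eqmod_leq _ (binprod_trunc_exp m_le_p ht H2m)) _ => //.
by apply: trunc_exp_eqmod1 => //; rewrite rpredM ?harmonic_pintegral.
Qed.

Lemma fermat_q2_pintegral : fermat_q2 p \in pintegral p.
Proof.
suff p_dvd : (p %| 2 ^ p.-1 - 1)%N by rewrite /fermat_q2 -natq_div // rpred_nat.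
have := @Euler_exp_totient 2 p; rewrite coprime_sym totient_prime //.
by move=> /(_ p_coprime2) /eqP; rewrite eqn_mod_dvd // expn_gt0.
Qed.

Section HalfRange.
Variable n : nat.
Hypothesis p_eq : p = (2 * n + 1)%N.

Let half_le_p : (n.+1 <= p)%N. Proof. by lia. Qed.

Lemma harmonic2_half_eqmod0 : rat_eqmod p 1 (harmonic 2 n.+1) 0.
Proof.
have := harmonic2_eqmod0; rewrite /harmonic (sum_nat_halves _ p_eq).
have -> : \sum_(1 <= j < n.+1) j%:R ^- 2 =
           2%:R^-1 * \sum_(1 <= j < n.+1) (j%:R ^- 2 + j%:R ^- 2) :> rat.
  by rewrite mulr_sumr; apply: eq_bigr => j _; move: (j%:R ^- 2) => x; field.
move=> H2p; rewrite -(mulr0 2%:R^-1); apply: rat_eqmodMl => //.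
apply: rat_eqmod_trans H2p; apply: rat_eqmod_sum => j; rewrite mem_index_iota => hj.
apply: rat_eqmodD; first exact: rat_eqmod_refl.
rewrite -!natrX; apply: rat_eqmod_natV; rewrite ?coprimeXr ?coprime_ltn //; try lia.
apply/rat_eqmodP; exists (2%:R * j%:R - p%:R); first by pintegral_closed.
by rewrite !natrX natrB; [ring | lia].
Qed.

(* 1/j + 1/(p - j) = p / (j (p - j)) = - p / j^2 modulo p^2. *)
Lemma wolstenholme : rat_eqmod p 2 (harmonic 1 p) 0.
Proof.
case/rat_eqmodP: harmonic2_half_eqmod0 => r hr; rewrite add0r expr1 => H2.
rewrite /harmonic (sum_nat_halves _ p_eq).
pose T : rat := \sum_(1 <= j < n.+1) (j%:R ^- 2 * (p - j)%:R^-1).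
have -> : \sum_(1 <= j < n.+1) (j%:R ^- 1 + (p - j)%:R ^- 1) =
          - p%:R * harmonic 2 n.+1 + p%:R ^+ 2 * T.
  rewrite /harmonic /T !mulr_sumr -big_split /=; apply: eq_big_nat => j hj.
  have j0 : j%:R != 0 :> rat by rewrite pnatr_eq0; lia.
  have pj0 : p%:R - j%:R != 0 :> rat by rewrite -natrB ?pnatr_eq0; lia.
  by rewrite natrB; [field; rewrite j0 pj0 | lia].
apply/rat_eqmodP; exists (T - r); last by rewrite H2; ring.
rewrite rpredB // /T big_seq; apply: rpred_sum => j; rewrite mem_index_iota => hj.
rewrite -exprVn rpredM ?rpredX //; apply: invn_pintegral; lia.
Qed.

Lemma binprod_full_eqmod1 t : t \in pintegral p -> rat_eqmod p 3 (binprod p p t) 1.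
Proof.
move=> ht; apply: rat_eqmod_trans (binprod_trunc_exp (leqnn p) ht harmonic2_eqmod0) _.
case/rat_eqmodP: wolstenholme => r hr; rewrite add0r => ->.
apply/rat_eqmodP; exists (t * r + p%:R ^+ 3 * (t * r) ^+ 2 / 2%:R); first by pintegral_closed.
by rewrite /trunc_exp; field.
Qed.

Lemma exp4_fermat_q2 : 4%:R ^+ n = 1 + p%:R * fermat_q2 p.
Proof.
rewrite /fermat_q2 mulrC divfK ?pnatr_eq0 -?lt0n ?prime_gt0 // natrB ?expn_gt0 //.
by rewrite natrX addrC subrK p_eq addn1 /= (_ : 4%:R = 2%:R ^+ 2 :> rat) ?exprM.
Qed.

Let u1 : rat_eqmod p 1 (4%:R ^+ n) 1.
Proof.
apply/rat_eqmodP; exists (fermat_q2 p); first exact: fermat_q2_pintegral.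
by rewrite exp4_fermat_q2 addrC.
Qed.

Let half_binprod_eqmod1 t : t \in pintegral p -> rat_eqmod p 1 (binprod p n.+1 t) 1.
Proof. by move=> ht; apply: binprod_eqmod1 => //; apply: harmonic2_half_eqmod0. Qed.

(* Z := L(-1/2) satisfies Z^2 = L(-1) = 4^n Z modulo p^3, and Z is a p-adic unit. *)
Lemma binprodN1_eqmod : rat_eqmod p 3 (binprod p n.+1 (-1)) ((4%:R ^+ n) ^+ 2).
Proof.
set u : rat := 4%:R ^+ n; set Z := binprod p n.+1 (- 2%:R^-1).
have M_eq : binprod p n.+1 (-1) = u * Z.
  by rewrite (binprodN1 p_eq) /Z (binprodNhalf p_eq) /u; field; rewrite expf_neq0 ?pnatr_eq0.
have ZZ : rat_eqmod p 3 (Z * Z) (u * Z).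
  rewrite -M_eq (_ : -1 = - 2%:R^-1 + - 2%:R^-1); last by field.
  by apply: binprod_mulD; rewrite ?rpredN //; apply: harmonic2_half_eqmod0.
have Z1 : rat_eqmod p 1 Z 1 by apply: half_binprod_eqmod1; rewrite rpredN.
have Z0 := rat_eqmod1_neq0 p_gt1 Z1.
have Zu : rat_eqmod p 3 Z u.
  have := rat_eqmodMl (rat_eqmod1_pintegralV Z1) ZZ.
  by rewrite mulKf // mulrCA mulVf ?mulr1.
rewrite M_eq expr2; apply: rat_eqmodMl => //.
exact: rat_eqmod_pintegral (rpred1 _) u1.
Qed.

Lemma binprod_ratio_eqmod :
  rat_eqmod p 3
    (binprod p p 1 ^+ 2 * binprod p p 2%:R * binprod p n.+1 (-1)
       / (binprod p n.+1 1 * (4%:R ^+ n) ^+ 7))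
    ((4%:R ^+ n) ^- 3).
Proof.
set u : rat := 4%:R ^+ n; set L := binprod p n.+1 1; set M := binprod p n.+1 (-1).
have hu : u \in pintegral p by apply: rat_eqmod_pintegral (rpred1 _) u1.
have hm1 : -1 \in pintegral p by rewrite rpredN rpred1.
have hM : M \in pintegral p by apply: binprod_pintegral.
have L0 : L != 0 by apply/(rat_eqmod1_neq0 p_gt1)/half_binprod_eqmod1/rpred1.
have M0 : M != 0 by apply/(rat_eqmod1_neq0 p_gt1)/half_binprod_eqmod1.
have hP t : t \in pintegral p -> binprod p p t \in pintegral p by apply: binprod_pintegral.
have P1 := binprod_full_eqmod1 (rpred1 (pintegral p)).
have P2 := binprod_full_eqmod1 (rpred_nat (pintegral p) 2).
have P_eq : rat_eqmod p 3 (binprod p p 1 ^+ 2 * binprod p p 2%:R) (1 ^+ 2 * 1).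
  apply: rat_eqmodM P2; [pintegral_closed | by rewrite hP ?rpred_nat |].
  by apply: rat_eqmodX P1; rewrite ?hP ?rpred1.
have LM : rat_eqmod p 3 (L * M)^-1 1.
  apply: (rat_eqmod1V p_gt1) => //; rewrite -(binprod0 p n.+1) -(subrr 1).
  by apply: binprod_mulD; rewrite ?rpred1 //; apply: harmonic2_half_eqmod0.
have M2 : rat_eqmod p 3 (M ^+ 2) (u ^+ 4).
  by rewrite (_ : 4 = 2 * 2)%N // exprM; apply: rat_eqmodX binprodN1_eqmod => //; pintegral_closed.
have hLMV : (L * M)^-1 \in pintegral p by apply: rat_eqmod_pintegral (rpred1 _) LM.
have huV : (u ^+ 7)^-1 \in pintegral p by rewrite -exprVn rpredX ?(rat_eqmod1_pintegralV u1).
have u0 : u != 0 by rewrite /u expf_neq0 ?pnatr_eq0.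
rewrite expr1n mulr1 in P_eq.
have -> : binprod p p 1 ^+ 2 * binprod p p 2%:R * M / (L * u ^+ 7) =
          binprod p p 1 ^+ 2 * binprod p p 2%:R * (M ^+ 2 * (L * M)^-1) * (u ^+ 7)^-1.
  by field; rewrite L0 M0 expf_neq0.
rewrite (_ : u ^- 3 = 1 * (u ^+ 4 * 1) * (u ^+ 7)^-1); last by field.
apply: rat_eqmodM; [pintegral_closed | done | | exact: rat_eqmod_refl].
apply: rat_eqmodM; [pintegral_closed | pintegral_closed | done |].
by apply: rat_eqmodM => //; pintegral_closed.
Qed.

End HalfRange.

End PrimeModulus.

Theorem lemma2p4 (p : nat) (hp : prime p) (hp3 : (3 < p)%N) :
  rat_eqmod p 4 (G p (p.+1)./2)
    ((-1) ^+ (p.-1)./2 * p%:R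
       * (1 - 3%:R * p%:R * fermat_q2 p + 6%:R * p%:R ^+ 2 * fermat_q2 p ^+ 2)).
Proof.
have [n p_eq] : exists n, p = (2 * n + 1)%N.
  exists p./2; case: (even_prime hp) => [p2 | p_odd]; first by rewrite p2 in hp3.
  by rewrite -{1}(odd_double_half p) p_odd -mul2n addnC.
have -> : (p.-1)./2 = n by rewrite p_eq addn1 mul2n doubleK.
have -> : (p.+1)./2 = n.+1 by rewrite p_eq addn1 mul2n -doubleS doubleK.
rewrite (G_half_binprod p_eq) -!(mulrA ((-1) ^+ n)).
apply: rat_eqmodMl; first by pintegral_closed.
apply: rat_eqmod_mulp; apply: rat_eqmod_trans (binprod_ratio_eqmod hp hp3 p_eq) _.
rewrite (exp4_fermat_q2 hp p_eq).
exact: (inv_cube_eqmod (prime_gt1 hp) (fermat_q2_pintegral hp hp3)).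
Qed.
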